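(* Every almost zero-dimensional space that is rim-$\sigma$-compact, or that is rational, is zero-dimensional.
   Context: All spaces are separable and metrizable. A subset $A$ of $X$ is a C-set in $X$ if it is an intersection of clopen subsets of $X$. $X$ is almost zero-dimensional if every point has a neighborhood basis consisting of C-sets in $X$. $X$ is rim-$\sigma$-compact if it has a basis of open sets with $\sigma$-compact boundaries, and rational if it has a basis of open sets with countable boundaries. *)

From Stdlib Require Import Reals List.
Open Scope R_scope.

(* A metric space.  Every notion below is topological, so quantifying over
   metric spaces is the same as quantifying over metrizable spaces. *)
Record MetricSpace := {
  carrier :> Type;
  dist : carrier -> carrier -> R;
  dist_self : forall x, dist x x = 0;
  dist_eq : forall x y, dist x y = 0 -> x = y;
  dist_sym : forall x y, dist x y = dist y x;
  dist_tri : forall x y z, dist x z <= dist x y + dist y z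
}.

Section Topo.
Variable X : MetricSpace.

Definition ball (x : X) (r : R) : X -> Prop := fun y => dist X x y < r.

Definition subset (A B : X -> Prop) : Prop := forall x, A x -> B x.

Definition is_open (U : X -> Prop) : Prop :=
  forall x, U x -> exists r, r > 0 /\ subset (ball x r) U.

Definition is_closed (F : X -> Prop) : Prop := is_open (fun x => ~ F x).

Definition clopen (U : X -> Prop) : Prop := is_open U /\ is_closed U.

Definition closure (A : X -> Prop) : X -> Prop :=
  fun x => forall r, r > 0 -> exists y, A y /\ dist X x y < r.

Definition boundary (A : X -> Prop) : X -> Prop :=
  fun x => closure A x /\ closure (fun y => ~ A y) x.

Definition countable_set (A : X -> Prop) : Prop :=
  exists g : X -> nat, forall x y, A x -> A y -> g x = g y -> x = y.

Definition compact_set (K : X -> Prop) : Prop :=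
  forall F : (X -> Prop) -> Prop,
    (forall U, F U -> is_open U) ->
    (forall x, K x -> exists U, F U /\ U x) ->
    exists l : list (X -> Prop),
      (forall U, In U l -> F U) /\
      (forall x, K x -> exists U, In U l /\ U x).

Definition sigma_compact_set (A : X -> Prop) : Prop :=
  exists K : nat -> (X -> Prop),
    (forall n, compact_set (K n)) /\
    (forall x, A x <-> exists n, K n x).

Definition separable : Prop :=
  exists D : X -> Prop, countable_set D /\ forall x, closure D x.

Definition C_set (A : X -> Prop) : Prop :=
  exists F : (X -> Prop) -> Prop,
    (forall C, F C -> clopen C) /\
    (forall x, A x <-> (forall C, F C -> C x)).

Definition neighborhood (N : X -> Prop) (x : X) : Prop :=
  exists U, is_open U /\ U x /\ subset U N.

Definition almost_zero_dimensional : Prop :=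
  forall x U, is_open U -> U x ->
    exists A, C_set A /\ neighborhood A x /\ subset A U.

Definition zero_dimensional : Prop :=
  forall x U, is_open U -> U x ->
    exists V, clopen V /\ V x /\ subset V U.

Definition rim_sigma_compact : Prop :=
  forall x U, is_open U -> U x ->
    exists V, is_open V /\ V x /\ subset V U /\ sigma_compact_set (boundary V).

Definition rational : Prop :=
  forall x U, is_open U -> U x ->
    exists V, is_open V /\ V x /\ subset V U /\ countable_set (boundary V).

End Topo.

(* Let x lie in an open V whose boundary is a union of
   compact sets K_n.  Separability and almost zero-dimensionality give
   countably many C-sets B_0 (a neighbourhood of x), B_1, ... inside V whose
   interiors cover V.  A compact set missing finitely many C-sets lies in a
   clopen set missing them, so there are clopen D_n containing K_n and missing
   B_0, ..., B_n.  Then V minus the union of the D_n is clopen and contains x: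
   near a point of V only finitely many D_n matter, and a point of the closure
   of V outside V lies on the boundary, hence in some D_n.  A rational space
   is rim-sigma-compact because countable sets are sigma-compact. *)

From Pilot Require Import Defs.
From Stdlib Require Import Reals List Classical ClassicalEpsilon Cantor Lra Lia.
Open Scope R_scope.

Lemma choice_or_default (I A : Type) (Q : A -> Prop) (P : I -> A -> Prop) :
  (exists a, Q a) ->
  exists f : I -> A, forall i, Q (f i) /\ ((exists a, Q a /\ P i a) -> P i (f i)).
Proof.
  intros [a0 Qa0].
  apply (choice (fun i a => Q a /\ ((exists a', Q a' /\ P i a') -> P i a))).
  intros i.
  destruct (classic (exists a, Q a /\ P i a)) as [[a [Qa Pa]] | Hnone].
  - exists a. auto.
  - exists a0. split; [exact Qa0 | intros H; contradiction].
Qed.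

Section MetricTopology.
Variable X : MetricSpace.

Lemma ball_open (x : X) r : is_open X (ball X x r).
Proof.
  intros y Hy. unfold ball in Hy. exists (r - Defs.dist X x y). split; [lra |].
  intros z Hz. unfold ball in *. pose proof (Defs.dist_tri X x y z). lra.
Qed.

Lemma open_boundary_disjoint (V : X -> Prop) y :
  is_open X V -> V y -> ~ boundary X V y.
Proof.
  intros HV Vy [_ Hcl]. destruct (HV y Vy) as [r [Hr Hsub]].
  destruct (Hcl r Hr) as [z [nVz Hz]]. exact (nVz (Hsub z Hz)).
Qed.

Lemma closure_diff_boundary (V : X -> Prop) y :
  closure X V y -> ~ V y -> boundary X V y.
Proof.
  intros Hcl nVy. split; [exact Hcl |].
  intros r Hr. exists y. rewrite Defs.dist_self. auto.
Qed.

Lemma not_closure_ball (V : X -> Prop) y :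
  ~ closure X V y -> exists r, r > 0 /\ forall z, ball X y r z -> ~ V z.
Proof.
  intros Hcl. apply not_all_ex_not in Hcl as [r Hr].
  apply imply_to_and in Hr as [Hr Hno].
  exists r. split; [exact Hr |]. intros z Hz Vz. apply Hno. exists z. auto.
Qed.

Lemma ball_avoiding_closed_sets (F : nat -> X -> Prop) y :
  (forall n, is_closed X (F n)) -> (forall n, ~ F n y) ->
  forall N, exists s, s > 0 /\
    forall z, ball X y s z -> forall n, (n < N)%nat -> ~ F n z.
Proof.
  intros Hcl Hy N. induction N as [| N [s [Hs Hball]]].
  - exists 1. split; [lra |]. intros z _ n Hn. lia.
  - destruct (Hcl N y (Hy N)) as [s' [Hs' Hball']].
    exists (Rmin s s'). split; [apply Rmin_pos; auto |].
    intros z Hz n Hn. unfold ball in Hz.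
    pose proof (Rmin_l s s'). pose proof (Rmin_r s s').
    destruct (Nat.eq_dec n N) as [-> | Hne].
    + apply Hball'. unfold ball. lra.
    + apply Hball; [unfold ball; lra | lia].
Qed.

Lemma clopen_ext (A B : X -> Prop) :
  (forall z, A z <-> B z) -> clopen X A -> clopen X B.
Proof.
  intros E [Ho Hc]. split.
  - intros x Bx. apply E in Bx. destruct (Ho x Bx) as [r [Hr Hsub]].
    exists r. split; [exact Hr |]. intros z Hz. apply E, Hsub, Hz.
  - intros x nBx. assert (nAx : ~ A x) by (rewrite E; exact nBx).
    destruct (Hc x nAx) as [r [Hr Hsub]].
    exists r. split; [exact Hr |]. intros z Hz. rewrite <- E. apply Hsub, Hz.
Qed.

Lemma clopen_empty : clopen X (fun _ => False).
Proof.
  split.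
  - intros x [].
  - intros x _. exists 1. split; [lra |]. intros z _ [].
Qed.

Lemma clopen_compl (C : X -> Prop) : clopen X C -> clopen X (fun z => ~ C z).
Proof.
  intros [Ho Hc]. split; [exact Hc |].
  intros x Hx. apply NNPP in Hx. destruct (Ho x Hx) as [r [Hr Hsub]].
  exists r. split; [exact Hr |]. intros z Hz nCz. exact (nCz (Hsub z Hz)).
Qed.

Lemma clopen_inter (A B : X -> Prop) :
  clopen X A -> clopen X B -> clopen X (fun z => A z /\ B z).
Proof.
  intros [HAo HAc] [HBo HBc]. split.
  - intros x [Ax Bx].
    destruct (HAo x Ax) as [r [Hr HsubA]], (HBo x Bx) as [r' [Hr' HsubB]].
    exists (Rmin r r'). split; [apply Rmin_pos; auto |].
    intros z Hz. unfold ball in Hz.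
    pose proof (Rmin_l r r'). pose proof (Rmin_r r r').
    split; [apply HsubA | apply HsubB]; unfold ball; lra.
  - intros x Hx. destruct (classic (A x)) as [Ax | nAx].
    + assert (nBx : ~ B x) by tauto. destruct (HBc x nBx) as [r [Hr Hsub]].
      exists r. split; [exact Hr |]. intros z Hz [_ Bz]. exact (Hsub z Hz Bz).
    + destruct (HAc x nAx) as [r [Hr Hsub]].
      exists r. split; [exact Hr |]. intros z Hz [Az _]. exact (Hsub z Hz Az).
Qed.

Lemma clopen_union (A B : X -> Prop) :
  clopen X A -> clopen X B -> clopen X (fun z => A z \/ B z).
Proof.
  intros HA HB. apply (clopen_ext (fun z => ~ (~ A z /\ ~ B z))); [intros z; tauto |].
  apply clopen_compl, clopen_inter; apply clopen_compl; assumption.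
Qed.

Lemma clopen_list_union (L : list (X -> Prop)) :
  (forall U, In U L -> clopen X U) -> clopen X (fun z => exists U, In U L /\ U z).
Proof.
  induction L as [| U0 L IH]; intros HL.
  - apply (clopen_ext (fun _ => False)); [| exact clopen_empty].
    intros z. split; [tauto |]. intros [U [[] _]].
  - apply (clopen_ext (fun z => U0 z \/ exists U, In U L /\ U z)).
    + intros z. split.
      * intros [U0z | [U [HU Uz]]]; [exists U0 | exists U]; simpl; auto.
      * intros [U [[<- | HU] Uz]]; [left | right; exists U]; auto.
    + apply clopen_union; [apply HL; left; reflexivity |].
      apply IH. intros U HU. apply HL. right. exact HU.
Qed.

Lemma C_set_empty : C_set X (fun _ => False).
Proof.
  exists (fun C => C = fun _ => False). split.
  - intros C ->. exact clopen_empty.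
  - intros x. split; [intros [] |]. intros H. exact (H _ eq_refl).
Qed.

Lemma C_set_separation (B : X -> Prop) y :
  C_set X B -> ~ B y -> exists C, clopen X C /\ C y /\ forall z, B z -> ~ C z.
Proof.
  intros [F [HF HB]] nBy.
  assert (HC : exists C, F C /\ ~ C y).
  { apply NNPP. intros Hno. apply nBy, HB. intros C FC.
    apply NNPP. intros nCy. apply Hno. exists C. auto. }
  destruct HC as [C [FC nCy]].
  exists (fun z => ~ C z). split; [apply clopen_compl, HF, FC |].
  split; [exact nCy |]. intros z Bz nCz. exact (nCz (proj1 (HB z) Bz C FC)).
Qed.

Lemma C_sets_separation (B : nat -> X -> Prop) y N :
  (forall m, (m <= N)%nat -> C_set X (B m) /\ ~ B m y) ->
  exists C, clopen X C /\ C y /\ forall m z, (m <= N)%nat -> B m z -> ~ C z.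
Proof.
  induction N as [| N IH]; intros HB.
  - destruct (HB 0%nat (le_n 0)) as [HB0 nB0y].
    destruct (C_set_separation (B 0%nat) y HB0 nB0y) as [C [HC [Cy Hdisj]]].
    exists C. split; [exact HC | split; [exact Cy |]].
    intros m z Hm. replace m with 0%nat by lia. apply Hdisj.
  - destruct IH as [C [HC [Cy Hdisj]]]; [intros m Hm; apply HB; lia |].
    destruct (HB (S N) (le_n _)) as [HBN nBNy].
    destruct (C_set_separation (B (S N)) y HBN nBNy) as [C' [HC' [C'y Hdisj']]].
    exists (fun z => C z /\ C' z). split; [apply clopen_inter; auto |].
    split; [auto |]. intros m z Hm Bz [Cz C'z].
    destruct (Nat.eq_dec m (S N)) as [-> | Hne].
    + exact (Hdisj' z Bz C'z).
    + exact (Hdisj m z ltac:(lia) Bz Cz).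
Qed.

Lemma compact_clopen_neighborhood (K S : X -> Prop) :
  compact_set X K ->
  (forall x, K x -> exists C, clopen X C /\ C x /\ forall z, S z -> ~ C z) ->
  exists D, clopen X D /\ subset X K D /\ forall z, S z -> ~ D z.
Proof.
  intros HK Hsep.
  destruct (HK (fun U => clopen X U /\ forall z, S z -> ~ U z)) as [L [HL Hcov]].
  - intros U [[Ho _] _]. exact Ho.
  - intros x Kx. destruct (Hsep x Kx) as [C [HC [Cx Hdisj]]]. exists C. auto.
  - exists (fun z => exists U, In U L /\ U z). split; [| split].
    + apply clopen_list_union. intros U HU. apply HL, HU.
    + exact Hcov.
    + intros z Sz [U [HU Uz]]. exact (proj2 (HL U HU) z Sz Uz).
Qed.

Lemma compact_subsingleton (K : X -> Prop) :
  (forall x y, K x -> K y -> x = y) -> compact_set X K.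
Proof.
  intros Hsub F _ Hcov. destruct (classic (exists p, K p)) as [[p Kp] | Hempty].
  - destruct (Hcov p Kp) as [U [FU Up]]. exists (U :: nil). split.
    + intros U' [<- | []]. exact FU.
    + intros y Ky. exists U. split; [left; reflexivity |].
      rewrite (Hsub y p Ky Kp). exact Up.
  - exists nil. split; [intros _ [] |]. intros y Ky. exfalso. eauto.
Qed.

Lemma countable_sigma_compact (A : X -> Prop) :
  countable_set X A -> sigma_compact_set X A.
Proof.
  intros [g Hg]. exists (fun n y => A y /\ g y = n). split.
  - intros n. apply compact_subsingleton.
    intros x y [Ax gx] [Ay gy]. apply Hg; congruence.
  - intros y. split; [intros Ay; exists (g y); auto | intros [n [Ay _]]; exact Ay].
Qed.

Lemma C_set_interior_cover (V : X -> Prop) :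
  separable X -> almost_zero_dimensional X -> is_open X V ->
  exists B : nat -> X -> Prop,
    (forall m, C_set X (B m) /\ subset X (B m) V) /\
    (forall y, V y -> exists m r, r > 0 /\ subset X (ball X y r) (B m)).
Proof.
  intros [D [[g Hg] Hdense]] Haz HV.
  (* Index m codes a pair (g d, j) standing for the ball of radius 1/(j+1)
     around the dense point d. *)
  set (radius := fun m : nat => / (INR (snd (of_nat m)) + 1)).
  set (around := fun m A => exists d, D d /\ g d = fst (of_nat m) /\
                                      subset X (ball X d (radius m)) A).
  destruct (choice_or_default nat (X -> Prop) (fun A => C_set X A /\ subset X A V)
              around) as [B HB].
  { exists (fun _ => False). split; [exact C_set_empty | intros z []]. }
  exists B. split; [intros m; apply HB |].
  intros y Vy. destruct (Haz y V HV Vy) as [A [HA [[O [HO [Oy HOA]]] HAV]]].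
  destruct (HO y Oy) as [r [Hr HballO]].
  destruct (archimed_cor1 (r / 2)) as [j [Hj Hj0]]; [lra |].
  assert (HjR : 0 < INR j) by (apply lt_0_INR; exact Hj0).
  set (e := / (INR j + 1)).
  assert (He : 0 < e) by (unfold e; apply Rinv_0_lt_compat; lra).
  assert (He_small : e <= / INR j) by (unfold e; apply Rinv_le_contravar; lra).
  destruct (Hdense y e He) as [d [Dd Hyd]].
  set (m := to_nat (g d, j)).
  assert (Hm : of_nat m = (g d, j)) by apply cancel_of_to.
  assert (HA_around : around m A).
  { exists d. unfold radius. rewrite Hm. simpl. split; [exact Dd | split; [reflexivity |]].
    intros z Hz. apply HOA, HballO. unfold ball in *.
    pose proof (Defs.dist_tri X y d z). fold e in Hz. lra. }
  destruct (proj2 (HB m) (ex_intro _ A (conj (conj HA HAV) HA_around)))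
    as [d' [Dd' [Hgd Hsub]]].
  rewrite Hm in Hgd. simpl in Hgd.
  assert (d' = d) as -> by (apply Hg; auto).
  assert (Hyd' : ball X d (radius m) y).
  { unfold ball, radius. rewrite Hm, Defs.dist_sym. exact Hyd. }
  destruct (ball_open d _ y Hyd') as [s [Hs Hball]].
  exists m, s. split; [exact Hs |]. intros z Hz. apply Hsub, Hball, Hz.
Qed.

End MetricTopology.
Section Carving.
Variable X : MetricSpace.
Variables (V : X -> Prop) (K B D : nat -> X -> Prop).
Hypothesis boundary_in_K : forall y, boundary X V y -> exists n, K n y.
Hypothesis B_sub_V : forall m, subset X (B m) V.
Hypothesis B_interior_cover :
  forall y, V y -> exists m r, r > 0 /\ subset X (ball X y r) (B m).
Hypothesis D_clopen : forall n, clopen X (D n).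
Hypothesis K_sub_D : forall n, subset X (K n) (D n).
Hypothesis D_misses_B : forall n m z, (m <= n)%nat -> B m z -> ~ D n z.

Definition carved : X -> Prop := fun y => V y /\ forall n, ~ D n y.

Lemma carved_open : is_open X carved.
Proof.
  intros y [Vy Hy]. destruct (B_interior_cover y Vy) as [m [r [Hr Hsub]]].
  destruct (ball_avoiding_closed_sets X D y (fun n => proj2 (D_clopen n)) Hy m)
    as [s [Hs Hfar]].
  exists (Rmin r s). split; [apply Rmin_pos; auto |].
  intros z Hz. unfold ball in Hz. pose proof (Rmin_l r s). pose proof (Rmin_r r s).
  assert (Bz : B m z) by (apply Hsub; unfold ball; lra).
  split; [exact (B_sub_V m z Bz) |].
  intros n. destruct (Nat.lt_ge_cases n m) as [Hn | Hn].
  - apply (Hfar z); [unfold ball; lra | exact Hn].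
  - exact (D_misses_B n m z Hn Bz).
Qed.

Lemma carved_closed : is_closed X carved.
Proof.
  intros y Hy. destruct (classic (exists n, D n y)) as [[n Dny] | Hno].
  - destruct (proj1 (D_clopen n) y Dny) as [r [Hr Hsub]].
    exists r. split; [exact Hr |]. intros z Hz [_ Hz']. exact (Hz' n (Hsub z Hz)).
  - assert (nVy : ~ V y).
    { intros Vy. apply Hy. split; [exact Vy |]. intros n Dny. apply Hno. eauto. }
    destruct (classic (closure X V y)) as [Hcl | Hcl].
    + destruct (boundary_in_K y (closure_diff_boundary X V y Hcl nVy)) as [n Kny].
      exfalso. apply Hno. exists n. apply K_sub_D, Kny.
    + destruct (not_closure_ball X V y Hcl) as [r [Hr Hfar]].
      exists r. split; [exact Hr |]. intros z Hz [Vz _]. exact (Hfar z Hz Vz).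
Qed.

Lemma carved_contains_B0 : subset X (B 0%nat) carved.
Proof.
  intros z Bz. split; [exact (B_sub_V 0%nat z Bz) |].
  intros n. apply (D_misses_B n 0%nat); [lia | exact Bz].
Qed.

End Carving.

Lemma clopen_between_C_set_and_open (X : MetricSpace) (V : X -> Prop)
    (K B : nat -> X -> Prop) :
  is_open X V ->
  (forall n, compact_set X (K n)) ->
  (forall y, boundary X V y <-> exists n, K n y) ->
  (forall m, C_set X (B m) /\ subset X (B m) V) ->
  (forall y, V y -> exists m r, r > 0 /\ subset X (ball X y r) (B m)) ->
  exists W, clopen X W /\ subset X (B 0%nat) W /\ subset X W V.
Proof.
  intros HV HK HKb HB Hcov.
  assert (HD : exists D : nat -> X -> Prop, forall n,
             clopen X (D n) /\ subset X (K n) (D n) /\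
             forall z, (exists m, (m <= n)%nat /\ B m z) -> ~ D n z).
  { apply (choice (fun n Dn => clopen X Dn /\ subset X (K n) Dn /\
             forall z, (exists m, (m <= n)%nat /\ B m z) -> ~ Dn z)).
    intros n. apply compact_clopen_neighborhood; [apply HK |].
    intros x Kx. destruct (C_sets_separation X B x n) as [C [HC [Cx Hdisj]]].
    - intros m _. split; [apply HB |]. intros Bmx.
      apply (open_boundary_disjoint X V x HV); [apply (proj2 (HB m)), Bmx |].
      apply HKb. exists n. exact Kx.
    - exists C. split; [exact HC | split; [exact Cx |]].
      intros z [m [Hm Bz]]. exact (Hdisj m z Hm Bz). }
  destruct HD as [D HD].
  assert (HB_sub_V : forall m, subset X (B m) V) by (intros m; apply HB).
  assert (HD_misses_B : forall n m z, (m <= n)%nat -> B m z -> ~ D n z).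
  { intros n m z Hm Bz. apply (proj2 (proj2 (HD n))). eauto. }
  exists (carved X V D). split; [split | split].
  - apply (carved_open X V B D); auto. intros n. apply HD.
  - apply (carved_closed X V K D); [intros y; apply HKb | intros n; apply HD ..].
  - apply (carved_contains_B0 X V B D); auto.
  - intros z [Vz _]. exact Vz.
Qed.

Lemma rim_sigma_compact_zero_dimensional (X : MetricSpace) :
  separable X -> almost_zero_dimensional X -> rim_sigma_compact X ->
  zero_dimensional X.
Proof.
  intros Hsep Haz Hrim x U HU Ux.
  destruct (Hrim x U HU Ux) as [V [HV [Vx [HVU [K [HK HKb]]]]]].
  destruct (C_set_interior_cover X V Hsep Haz HV) as [B [HB Hcov]].
  destruct (Haz x V HV Vx) as [Bx [HBx [[N [_ [Nx HNBx]]] HBxV]]].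
  set (B' := fun m => match m with 0%nat => Bx | S m => B m end).
  destruct (clopen_between_C_set_and_open X V K B' HV HK HKb) as [W [HW [HBxW HWV]]].
  - intros [| m]; simpl; auto.
  - intros y Vy. destruct (Hcov y Vy) as [m Hm]. exists (S m). exact Hm.
  - exists W. split; [exact HW | split].
    + apply HBxW, HNBx, Nx.
    + intros z Wz. apply HVU, HWV, Wz.
Qed.

Lemma rational_rim_sigma_compact (X : MetricSpace) :
  rational X -> rim_sigma_compact X.
Proof.
  intros Hrat x U HU Ux. destruct (Hrat x U HU Ux) as [V [HV [Vx [HVU Hcount]]]].
  exists V. repeat split; auto. apply countable_sigma_compact, Hcount.
Qed.

Theorem corollary4p6 (X : MetricSpace) :
  separable X ->
  almost_zero_dimensional X ->
  (rim_sigma_compact X \/ rational X) ->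
  zero_dimensional X.
Proof.
  intros Hsep Haz [Hrim | Hrat].
  - exact (rim_sigma_compact_zero_dimensional X Hsep Haz Hrim).
  - exact (rim_sigma_compact_zero_dimensional X Hsep Haz (rational_rim_sigma_compact X Hrat)).
Qed.
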